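(* Let $t \geq 1$ and $N \geq 2t+1$ be integers, and let $G$ be a graph with no isolated vertices, $e(G)=N$, $\Delta(G) = N-t > \frac{N}{2}$, and $e(L(G)) = f(N,N-t)$. Then $f(N,N-t) = \binom{N-t}{2} + \binom{t+2}{2} - 1$, and $G$ is one of the following: (1) the graph $Q(N,t)$: $G$ contains two adjacent vertices $u$ and $v$ with $\deg(u) = N-t$ and $\deg(v) = t+1$, such that all $t$ neighbours of $v$ other than $u$ are also neighbours of $u$ (so $G$ consists of the star centred at $u$ with $N-t$ leaves together with $t$ edges joining $v$ to $t$ other leaves of this star); (2) only when $t=3$, the graph $Q^*(N,3)$: the star centred at a vertex $u$ with $N-3$ leaves together with a triangle on three of these leaves.
   Context: All graphs are finite and simple; $L(G)$ is the line graph of $G$; $e(\cdot)$, $\Delta(\cdot)$, $\delta(\cdot)$ denote number of edges, maximum degree and minimum degree. For integers $N \ge \Delta \ge 1$, $f(N,\Delta) = \max\{ e(L(G)) : e(G)=N, \Delta(G)=\Delta, \delta(G)\geq 1\}$, the maximum over all simple graphs $G$. *)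

From mathcomp Require Import all_boot.
Set Implicit Arguments. Unset Strict Implicit. Unset Printing Implicit Defensive.

Definition simple_graph (T : finType) (g : rel T) : Prop :=
  symmetric g /\ irreflexive g.

Definition edge_set (T : finType) (g : rel T) : {set {set T}} :=
  [set [set p.1; p.2] | p in [pred p : T * T | g p.1 p.2]].

Definition nedges (T : finType) (g : rel T) : nat := #|edge_set g|.

Definition deg (T : finType) (g : rel T) (x : T) : nat := #|[set y | g x y]|.
Definition maxdeg (T : finType) (g : rel T) : nat := \max_(x : T) deg g x.

Definition line_rel (T : finType) (g : rel T) : rel {set T} :=
  fun a b => [&& a \in edge_set g, b \in edge_set g, a != b & (a :&: b != set0)].

Definition nLedges (T : finType) (g : rel T) : nat := nedges (line_rel g).

Definition admissible (N D : nat) (T : finType) (g : rel T) : Prop :=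
  simple_graph g /\ nedges g = N /\ maxdeg g = D /\ (forall x : T, 0 < deg g x).

(* is_f N D m  :<->  m = f(N,D), i.e. m is the maximum of e(L(G)) over all
   admissible finite simple graphs G. *)
Definition is_f (N D m : nat) : Prop :=
  (exists (T : finType) (g : rel T), admissible N D g /\ nLedges g = m) /\
  (forall (T : finType) (g : rel T), admissible N D g -> nLedges g <= m).

Definition is_Q (N t : nat) (T : finType) (g : rel T) : Prop :=
  exists u v : T, [/\ g u v, deg g u = N - t, deg g v = t.+1 &
    forall w, g v w -> w != u -> g u w].

Definition is_Qstar3 (N : nat) (T : finType) (g : rel T) : Prop :=
  exists u a b c : T,
    [/\ deg g u = N - 3, [/\ g u a, g u b & g u c],
        [/\ a != b, b != c & a != c], [/\ g a b, g b c & g a c] &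
        forall x y, g x y ->
          [\/ x = u, y = u | (x \in [:: a; b; c]) && (y \in [:: a; b; c])]].

From mathcomp Require Import all_boot zify.
Set Implicit Arguments. Unset Strict Implicit. Unset Printing Implicit Defensive.

(* Let u be a vertex of maximum degree N - t; then H = G - u has t edges.
   Counting pairs of adjacent edges by their common vertex gives
   e(L(G)) = C(N - t, 2) + e(L(H)) + (sum of deg_H over the neighbours of u)
           <= C(N - t, 2) + C(t, 2) + 2 t,
   a bound attained by Q(N, t).  In the equality case any two edges of H meet,
   so they form a star or a triangle, and every vertex of an edge of H is a
   neighbour of u: a star gives Q(N, t), a triangle gives t = 3 and Q*(N, 3). *)

Lemma card_in_sum (T : finType) (A : {set T}) (P : pred T) :
  #|[set x in A | P x]| = \sum_(x in A) P x.
Proof. by rewrite -sum1dep_card big_mkcondr; apply: eq_bigr => x _; case: (P x). Qed.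

Lemma card_sum_mem (T : finType) (A : {set T}) : #|A| = \sum_x (x \in A).
Proof. by rewrite -sum1_card big_mkcond; apply: eq_bigr => x _; case: (x \in A). Qed.

Lemma deg_sum (T : finType) (g : rel T) x : deg g x = \sum_y g x y.
Proof. by rewrite /deg card_sum_mem; apply: eq_bigr => y _; rewrite inE. Qed.

Lemma sum_option (A : finType) (F : option A -> nat) :
  \sum_x F x = F None + \sum_a F (Some a).
Proof.
rewrite (bigD1 None) //= (reindex_omap Some id) => [|[]//].
by congr (_ + _); apply: eq_bigl => a; rewrite eqxx.
Qed.

Lemma edge_setP (T : finType) (g : rel T) (e : {set T}) :
  reflect (exists x y, g x y /\ e = [set x; y]) (e \in edge_set g).
Proof.
apply: (iffP imsetP) => [[p gp ->]|[x [y [gxy ->]]]]; first by exists p.1, p.2.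
by exists (x, y).
Qed.

Lemma edge_set2 (T : finType) (g : rel T) x y :
  g x y -> [set x; y] \in edge_set g.
Proof. by move=> gxy; apply/edge_setP; exists x, y. Qed.

Lemma edge_set_eq2 (T : finType) (g : rel T) e x y :
  e \in edge_set g -> x \in e -> y \in e -> x != y -> e = [set x; y].
Proof.
case/edge_setP=> p [q [_ ->]].
by rewrite !inE => /orP[]/eqP-> /orP[]/eqP->; rewrite ?eqxx // setUC.
Qed.

Lemma maxdeg_attained (T : finType) (g : rel T) :
  0 < nedges g -> exists u, deg g u = maxdeg g.
Proof.
case/card_gt0P=> _ /edge_setP [x _].
have [|u max_u] := @eq_bigmax T (deg g); first by apply/card_gt0P; exists x.
by exists u; rewrite /maxdeg max_u.
Qed.

Definition intersecting (T : finType) (h : rel T) : Prop :=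
  forall x y z w, h x y -> h z w -> [|| x == z, x == w, y == z | y == w].

Section LineGraphBound.

Variables (T : finType) (g : rel T).

Lemma line_edges_sub_pairs : edge_set (line_rel g) \subset
  [set P : {set {set T}} | P \subset edge_set g & #|P| == 2].
Proof.
apply/subsetP => P /edge_setP [a [b [/and4P [ga gb ab _] ->]]].
by rewrite inE subUset !sub1set ga gb cards2 ab.
Qed.

Lemma nLedges_le_binom : nLedges g <= 'C(nedges g, 2).
Proof.
by rewrite /nLedges /nedges -cards_draws; apply/subset_leq_card/line_edges_sub_pairs.
Qed.

Lemma nLedges_binom_intersecting :
  nLedges g = 'C(nedges g, 2) -> intersecting g.
Proof.
move=> eqL x y z w gxy gzw.
have all_pairs : edge_set (line_rel g) =
    [set P : {set {set T}} | P \subset edge_set g & #|P| == 2].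
  by apply/eqP; rewrite eqEcard line_edges_sub_pairs cards_draws -eqL /=.
case: (eqVneq [set x; y] [set z; w]) => [exy|nexy].
  have : x \in [set z; w] by rewrite -exy !inE eqxx.
  by rewrite !inE => /orP[]->; rewrite ?orbT.
have : [set [set x; y]; [set z; w]] \in edge_set (line_rel g).
  by rewrite all_pairs inE subUset !sub1set !edge_set2 // cards2 nexy.
case/edge_setP=> p [q [/and4P [_ _ pq /set0Pn [v vpq]] Epq]].
have pq_xyzw : p :&: q = [set x; y] :&: [set z; w].
  have : (p \in [set p; q]) && (q \in [set p; q]) by rewrite !inE !eqxx orbT.
  rewrite -Epq !inE => /andP[/orP[]/eqP Ep /orP[]/eqP Eq]; subst p q.
  - by rewrite eqxx in pq.
  - by [].
  - exact: setIC.
  - by rewrite eqxx in pq.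
move: vpq; rewrite pq_xyzw !inE => /andP[/orP[]/eqP-> /orP[]/eqP->];
  by rewrite eqxx ?orbT.
Qed.

End LineGraphBound.

Definition incident (T : finType) (g : rel T) (x : T) : {set {set T}} :=
  [set e in edge_set g | x \in e].

Definition incident_pairs (T : finType) (g : rel T) (x : T) : {set {set {set T}}} :=
  [set P : {set {set T}} | P \subset incident g x & #|P| == 2].

Lemma line_edgeE (T : finType) (g : rel T) (P : {set {set T}}) :
  (P \in edge_set (line_rel g)) = [exists x, P \in incident_pairs g x].
Proof.
apply/edge_setP/existsP => [[a [b [/and4P [ga gb ab /set0Pn [x]]]]]|[x]].
  rewrite inE => /andP[xa xb] ->; exists x.
  by rewrite inE subUset !sub1set !inE ga gb xa xb cards2 ab.
rewrite inE => /andP[sub /cards2P [a [b [ab EP]]]].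
move: sub; rewrite EP subUset !sub1set !inE => /andP[/andP[ga xa] /andP[gb xb]].
exists a, b; split=> //; rewrite /line_rel ga gb ab.
by apply/set0Pn; exists x; rewrite inE xa xb.
Qed.

Lemma incident_pairs_disjoint (T : finType) (g : rel T) (P : {set {set T}}) x y :
  P \in incident_pairs g x -> P \in incident_pairs g y -> x = y.
Proof.
rewrite !inE => /andP[subx /cards2P [a [b [ab EP]]]] /andP[suby _].
move: subx suby; rewrite EP !subUset !sub1set !inE.
move=> /andP[/andP[ga xa] /andP[gb xb]] /andP[/andP[_ ya] /andP[_ yb]].
apply/eqP/negP => /negP xy.
by move: ab; rewrite (edge_set_eq2 ga xa ya xy) (edge_set_eq2 gb xb yb xy) eqxx.
Qed.

Section SimpleGraph.

Variables (T : finType) (g : rel T).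
Hypothesis g_simple : simple_graph g.

Lemma card_edge e : e \in edge_set g -> #|e| = 2.
Proof.
case/edge_setP=> x [y [gxy ->]]; rewrite cards2.
by case: eqVneq gxy => // ->; rewrite g_simple.2.
Qed.

Lemma deg_incident x : deg g x = #|incident g x|.
Proof.
have [g_sym g_irr] := g_simple.
have -> : incident g x = [set [set x; y] | y in [set y | g x y]].
  apply/setP => e; rewrite inE; apply/andP/imsetP => [[]|[y]].
    case/edge_setP=> p [q [gpq ->]]; rewrite !inE => /orP[]/eqP->.
      by exists q; rewrite ?inE.
    by exists p; rewrite ?inE 1?g_sym // setUC.
  by rewrite inE => gxy ->; rewrite edge_set2 // !inE eqxx.
rewrite card_in_imset // => y z; rewrite !inE => gxy gxz eq_xyz.
have : y \in [set x; z] by rewrite -eq_xyz !inE eqxx orbT.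
by rewrite !inE => /orP[]/eqP // exy; rewrite exy g_irr in gxy.
Qed.

Lemma sum_deg : \sum_x deg g x = 2 * nedges g.
Proof.
under eq_bigr => x _ do rewrite deg_incident card_in_sum.
rewrite exchange_big /= /nedges -sum1_card big_distrr /=.
by apply: eq_bigr => e ge; rewrite muln1 -(card_edge ge) card_sum_mem.
Qed.

Lemma nLedges_sum_binom : nLedges g = \sum_x 'C(deg g x, 2).
Proof.
have count_centre P : P \in edge_set (line_rel g) ->
    \sum_x (P \in incident_pairs g x) = 1.
  rewrite line_edgeE => /existsP [x Px].
  rewrite (bigD1 x) //= Px big1 // => y yx; apply/eqP; rewrite eqb0.
  by apply: contra yx => Py; rewrite (incident_pairs_disjoint Py Px).
rewrite /nLedges /nedges -sum1_card.
rewrite (eq_bigr _ (fun P => esym \o count_centre P)).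
rewrite exchange_big /=; apply: eq_bigr => x _.
rewrite deg_incident -cards_draws -card_in_sum; apply: eq_card => P.
by rewrite !inE line_edgeE andb_idl // => Px; apply/existsP; exists x; rewrite inE.
Qed.

End SimpleGraph.

Definition del_vertex (T : finType) (g : rel T) (u : T) : rel T :=
  [rel x y | [&& g x y, x != u & y != u]].

Section DeleteVertex.

Variables (T : finType) (g : rel T) (u : T).
Hypothesis g_simple : simple_graph g.
Local Notation H := (del_vertex g u).

Lemma del_vertexE x y : H x y = [&& g x y, x != u & y != u].
Proof. by []. Qed.

Lemma del_vertex_simple : simple_graph H.
Proof.
have [g_sym g_irr] := g_simple.
by split=> [x y|x]; rewrite !del_vertexE ?g_irr // g_sym (andbC (x != u)).
Qed.

Lemma edge_set_del_vertex : edge_set H = [set e in edge_set g | u \notin e].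
Proof.
apply/setP => e; rewrite inE.
apply/edge_setP/andP => [[x [y [/and3P[gxy xu yu] ->]]]|].
  by rewrite edge_set2 // !inE negb_or eq_sym xu eq_sym yu.
case=> /edge_setP [x [y [gxy ->]]]; rewrite !inE negb_or => /andP[ux uy].
by exists x, y; rewrite del_vertexE gxy eq_sym ux eq_sym uy.
Qed.

Lemma nedges_del_vertex : nedges g = deg g u + nedges H.
Proof.
rewrite /nedges edge_set_del_vertex deg_incident //.
rewrite -(cardsID [set e : {set T} | u \in e] (edge_set g)).
by congr (_ + _); apply: eq_card => e; rewrite !inE // andbC.
Qed.

Lemma deg_del_vertex_centre : deg H u = 0.
Proof. by apply: eq_card0 => y; rewrite !inE del_vertexE eqxx andbF. Qed.

Lemma deg_del_vertex x : x != u -> deg g x = deg H x + g u x.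
Proof.
move=> xu; rewrite /deg (cardsD1 u) inE g_simple.1 addnC.
by congr (_ + _); apply: eq_card => y; rewrite !inE del_vertexE xu andbC.
Qed.

Lemma nLedges_del_vertex :
  nLedges g = 'C(deg g u, 2) + nLedges H + \sum_(x | g u x) deg H x.
Proof.
have binom_deg x : 'C(deg g x, 2) = 'C(deg H x, 2)
    + (if g u x then deg H x else 0) + (if x == u then 'C(deg g u, 2) else 0).
  have [->|xu] := eqVneq x u.
    by rewrite deg_del_vertex_centre g_simple.2 /= !add0n.
  rewrite deg_del_vertex // addn0; case: (g u x) => /=; last by rewrite !addn0.
  by rewrite addn1 binS bin1.
have pick_centre :
    \sum_x (if x == u then 'C(deg g u, 2) else 0) = 'C(deg g u, 2).
  by rewrite (bigD1 u) //= eqxx big1 ?addn0 // => x /negbTE->.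
rewrite big_mkcond (nLedges_sum_binom g_simple).
rewrite (nLedges_sum_binom del_vertex_simple).
rewrite (eq_bigr _ (fun x _ => binom_deg x)) !big_split /= pick_centre; lia.
Qed.

Lemma sum_deg_del_vertex :
  \sum_(x | g u x) deg H x + \sum_(x | ~~ g u x) deg H x = 2 * nedges H.
Proof. by rewrite -(sum_deg del_vertex_simple) (bigID (g u) predT). Qed.

Lemma nLedges_le_del_vertex :
  nLedges g <= 'C(deg g u, 2) + 'C(nedges H, 2) + 2 * nedges H.
Proof.
have := nLedges_le_binom H; have := sum_deg_del_vertex.
rewrite nLedges_del_vertex; lia.
Qed.

Lemma nLedges_eq_del_vertex :
  'C(deg g u, 2) + 'C(nedges H, 2) + 2 * nedges H <= nLedges g ->
  intersecting H /\ (forall x, 0 < deg H x -> g u x).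
Proof.
have := nLedges_le_binom H; have := sum_deg_del_vertex.
rewrite nLedges_del_vertex => sumH leH eqL; split.
  by apply: nLedges_binom_intersecting; lia.
have /eqP : \sum_(x | ~~ g u x) deg H x = 0 by lia.
rewrite sum_nat_eq0 => /forall_inP deg0 x.
by apply: contraTT => /deg0/eqP->.
Qed.

End DeleteVertex.

Definition hub (T : finType) (h : rel T) (v : T) : bool :=
  [forall x, forall y, h x y ==> (x == v) || (y == v)].

Section IntersectingEdges.

Variables (T : finType) (h : rel T).
Hypotheses (h_simple : simple_graph h) (h_int : intersecting h).

Lemma hubPn a b : h a b -> ~~ hub h a -> exists2 c, h b c & c != a.
Proof.
move=> hab /forallPn [x /forallPn [y]]; rewrite negb_imply negb_or.
case/and3P=> hxy /negbTE xa /negbTE ya.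
have := h_int hxy hab; rewrite xa ya /= => /orP[]/eqP <-.
  by exists y; rewrite ?ya.
by exists x; rewrite 1?h_simple.1 ?xa.
Qed.

Lemma triangle_of_no_hub a b : h a b -> ~~ hub h a -> ~~ hub h b ->
  exists c, [/\ h b c, h a c &
    forall x y, h x y -> (x \in [:: a; b; c]) && (y \in [:: a; b; c])].
Proof.
move=> hab no_hub_a no_hub_b.
have [c hbc ca] := hubPn hab no_hub_a.
have hba : h b a by rewrite h_simple.1.
have [d had db] := hubPn hba no_hub_b.
have neq_edge x y : h x y -> (x == y) = false.
  by apply: contraTF => /eqP->; rewrite h_simple.2.
have [ab bc] := (neq_edge _ _ hab, neq_edge _ _ hbc).
have ba : (b == a) = false by rewrite eq_sym.
have ac : (a == c) = false by rewrite eq_sym; apply/negbTE.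
have hac : h a c.
  by move: (h_int had hbc); rewrite ab ac (negbTE db) /= => /eqP <-.
have in_abc x y : h x y -> x \in [:: a; b; c].
  move=> hxy; apply/negPn/negP; rewrite !inE !negb_or => /and3P [xa xb xc].
  move: (h_int hxy hab) (h_int hxy hbc) (h_int hxy hac).
  rewrite (negbTE xa) (negbTE xb) (negbTE xc) /=.
  by case/orP=> /eqP->; rewrite ?ab ?ac ?ba ?bc.
exists c; split=> // x y hxy.
by rewrite (in_abc x y) // (in_abc y x) // h_simple.1.
Qed.

Lemma hub_or_triangle a b : h a b ->
  (exists v w, h v w /\ hub h v) \/
  exists a b c, [/\ h a b, h b c, h a c &
    forall x y, h x y -> (x \in [:: a; b; c]) && (y \in [:: a; b; c])].
Proof.
move=> hab; have [hub_a|no_hub_a] := boolP (hub h a); first by left; exists a, b.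
have [hub_b|no_hub_b] := boolP (hub h b).
  by left; exists b, a; rewrite h_simple.1.
have [c [hbc hac in_abc]] := triangle_of_no_hub hab no_hub_a no_hub_b.
by right; exists a, b, c.
Qed.

End IntersectingEdges.

Section ExtremalStructure.

Variables (T : finType) (g : rel T) (u : T) (N t : nat).
Local Notation H := (del_vertex g u).
Hypotheses (g_simple : simple_graph g) (deg_u : deg g u = N - t).
Hypotheses (edges_H : nedges H = t) (adj_u : forall x, 0 < deg H x -> g u x).

Lemma deg_del_vertex_gt0 x y : H x y -> 0 < deg H x.
Proof. by move=> hxy; apply/card_gt0P; exists y; rewrite inE. Qed.

Lemma is_Q_of_hub v w : H v w -> hub H v -> is_Q N t g.
Proof.
move=> hvw /forallP hub_v.
have deg_v : deg H v = t.
  rewrite (deg_incident (del_vertex_simple u g_simple)) -edges_H.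
  apply: eq_card => e; rewrite inE andb_idr // => /edge_setP [x [y [hxy ->]]].
  have /forallP/(_ y)/implyP/(_ hxy) := hub_v x.
  by rewrite !inE => /orP[]/eqP->; rewrite eqxx ?orbT.
have guv := adj_u (deg_del_vertex_gt0 hvw).
have vu : v != u by case/and3P: hvw.
exists u, v; split=> //.
  by rewrite (deg_del_vertex g_simple vu) deg_v guv addn1.
move=> x gvx xu; apply/adj_u/(@deg_del_vertex_gt0 x v).
by rewrite del_vertexE g_simple.1 gvx xu vu.
Qed.

Lemma is_Qstar3_of_triangle a b c :
  H a b -> H b c -> H a c ->
  (forall x y, H x y -> (x \in [:: a; b; c]) && (y \in [:: a; b; c])) ->
  t = 3 /\ is_Qstar3 N g.
Proof.
move=> hab hbc hac in_abc.
have neq_edge x y : H x y -> x != y.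
  by apply: contraTneq => ->; rewrite (del_vertex_simple u g_simple).2.
have [ab bc] := (neq_edge _ _ hab, neq_edge _ _ hbc).
have ac := neq_edge _ _ hac.
have t3 : t = 3.
  have set2_neq x y z w : x \notin [set z; w] -> [set x; y] != [set z; w].
    by move=> xzw; apply: contraNneq xzw => <-; rewrite !inE eqxx.
  have edge_set_H : edge_set H = [set [set a; b]; [set b; c]; [set a; c]].
    apply/setP => e; apply/edge_setP/idP => [[x [y [hxy ->]]]|].
      move: (in_abc x y hxy) (neq_edge x y hxy); rewrite !inE.
      case/andP=> /or3P[]/eqP-> /or3P[]/eqP->;
        by rewrite ?eqxx // setUC ?eqxx ?orbT.
    rewrite !inE -orbA => /or3P[]/eqP->;
      by [exists a, b | exists b, c | exists a, c].
  rewrite -edges_H /nedges edge_set_H -setUA cardsU1 cards2 !inE.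
  have n1 : [set a; b] != [set b; c].
    by apply: set2_neq; rewrite !inE negb_or ab ac.
  have b_ac : b \notin [set a; c] by rewrite !inE negb_or eq_sym ab bc.
  have n2 : [set b; c] != [set a; c] by apply: set2_neq b_ac.
  have n3 : [set a; b] != [set a; c] by rewrite setUC; apply: set2_neq b_ac.
  by rewrite (negbTE n1) (negbTE n3) n2.
split=> //; exists u, a, b, c; split.
- by rewrite deg_u t3.
- have hca : H c a by rewrite (del_vertex_simple u g_simple).1.
  by split; apply/adj_u/deg_del_vertex_gt0; [exact: hab | exact: hbc | exact: hca].
- by [].
- by case/and3P: hab => ->; case/and3P: hbc => ->; case/and3P: hac => ->.
move=> x y gxy; have [->|xu] := eqVneq x u; first exact: Or31.
have [->|yu] := eqVneq y u; first exact: Or32.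
by apply/Or33/in_abc; rewrite del_vertexE gxy xu yu.
Qed.

End ExtremalStructure.

Section ExtremalGraph.

Variables t s : nat.
Local Notation V := (option (option ('I_t + 'I_s))).

(* None is the centre u, Some None is v, the Some (Some (inl i)) are the t
   common neighbours of u and v, and the Some (Some (inr j)) the s other leaves. *)
Definition qgraph (x y : V) : bool :=
  match x, y with
  | None, Some _ | Some _, None => true
  | Some None, Some (Some (inl _)) | Some (Some (inl _)), Some None => true
  | _, _ => false
  end.

Lemma qgraph_simple : simple_graph qgraph.
Proof. by split=> [[[[i|j]|]|] [[[i'|j']|]|]|[[[i|j]|]|]]. Qed.

Lemma sum_qgraph (F : V -> nat) : \sum_x F x = F None + F (Some None)
  + \sum_i F (Some (Some (inl i))) + \sum_j F (Some (Some (inr j))).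
Proof. by rewrite !sum_option big_sumType /= !addnA. Qed.

Lemma deg_qgraph (x : V) : deg qgraph x =
  match x with
  | None => t + s + 1
  | Some None => t + 1
  | Some (Some (inl _)) => 2
  | Some (Some (inr _)) => 1
  end.
Proof.
case: x => [[[i|j]|]|];
  by rewrite deg_sum sum_qgraph /= !sum_nat_const !card_ord; lia.
Qed.

Lemma qgraph_extremal :
  admissible (t + s + 1 + t) (t + s + 1) qgraph /\
  nLedges qgraph = 'C(t + s + 1, 2) + 'C(t + 2, 2) - 1.
Proof.
have sum_deg_qgraph (F : nat -> nat) : \sum_x F (deg qgraph x) =
    F (t + s + 1) + F (t + 1) + t * F 2 + s * F 1.
  under eq_bigr do rewrite deg_qgraph.
  by rewrite sum_qgraph /= !sum_nat_const !card_ord.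
have := sum_deg qgraph_simple; rewrite (sum_deg_qgraph id) /= => edges_q.
split; first split; [exact: qgraph_simple | split; [lia | split]|].
- apply/eqP; rewrite eqn_leq; apply/andP; split.
    apply/bigmax_leqP => -[[[i|j]|]|] _; rewrite deg_qgraph; try lia.
    by have := ltn_ord i; lia.
  by have := @leq_bigmax _ (deg qgraph) None; rewrite deg_qgraph.
- by move=> [[[i|j]|]|]; rewrite deg_qgraph; lia.
rewrite (nLedges_sum_binom qgraph_simple) (sum_deg_qgraph (fun d => 'C(d, 2))).
rewrite (_ : 'C(2, 2) = 1) // (_ : 'C(1, 2) = 0) //.
rewrite !addn1 addn2 !binS !bin1 bin0; lia.
Qed.

End ExtremalGraph.

Lemma extremal_graph_exists N t : 2 * t + 1 <= N ->
  exists (V : finType) (q : rel V),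
    admissible N (N - t) q /\ nLedges q = 'C(N - t, 2) + 'C(t + 2, 2) - 1.
Proof.
move=> tN; pose s := N - 2 * t - 1.
have [adm_q nLedges_q] := qgraph_extremal t s.
have [e1 e2] : t + s + 1 + t = N /\ t + s + 1 = N - t by rewrite /s; lia.
rewrite e1 e2 in adm_q; rewrite e2 in nLedges_q.
by exists _, (@qgraph t s).
Qed.

Theorem mainTheorem13 (t N : nat) (T : finType) (g : rel T) :
  1 <= t -> 2 * t + 1 <= N ->
  simple_graph g ->
  (forall x : T, 0 < deg g x) ->
  nedges g = N ->
  maxdeg g = N - t ->
  N < 2 * (N - t) ->
  is_f N (N - t) (nLedges g) ->
  nLedges g = 'C(N - t, 2) + 'C(t + 2, 2) - 1 /\
  (is_Q N t g \/ (t = 3 /\ is_Qstar3 N g)).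
Proof.
move=> t_gt0 tN g_simple _ edges_g maxdeg_g _ [_ f_max].
have [u deg_u] : exists u, deg g u = N - t.
  by rewrite -maxdeg_g; apply: maxdeg_attained; rewrite edges_g; lia.
have edges_H : nedges (del_vertex g u) = t.
  by have := nedges_del_vertex u g_simple; lia.
have [V [q [adm_q nLedges_q]]] := extremal_graph_exists tN.
have lower := f_max _ _ adm_q; rewrite nLedges_q in lower.
have upper := nLedges_le_del_vertex u g_simple; rewrite deg_u edges_H in upper.
have binom_t2 : 'C(t + 2, 2) = 'C(t, 2) + 2 * t + 1.
  by rewrite addn2 !binS !bin1 bin0; lia.
have [H_int adj_u] : intersecting (del_vertex g u) /\
    (forall x, 0 < deg (del_vertex g u) x -> g u x).
  by apply: nLedges_eq_del_vertex g_simple _; rewrite deg_u edges_H; lia.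
split; first lia.
have /card_gt0P [_ /edge_setP [a [b [hab _]]]] : 0 < nedges (del_vertex g u).
  by rewrite edges_H.
case: (hub_or_triangle (del_vertex_simple u g_simple) H_int hab).
- move=> [v [w [hvw hub_v]]]; left.
  exact: (is_Q_of_hub g_simple deg_u edges_H adj_u hvw hub_v).
- move=> [a' [b' [c [hab' hbc hac in_abc]]]]; right.
  exact: (is_Qstar3_of_triangle g_simple deg_u edges_H adj_u hab' hbc hac in_abc).
Qed.
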